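(* Let $a,d$ be positive integers with $d$ not a perfect square, $\alpha=a+\sqrt d$, $N_\alpha=a^2-d$, and suppose $-N_\alpha$ is an odd perfect square. Let $t,u$ be positive integers with $1\le u\le8$ such that $\varepsilon=(t+u\sqrt d)/2$ is a unit of the ring of integers of $\mathbb{Q}(\sqrt d)$, define $x_k+y_k\sqrt d=\alpha\varepsilon^{2k}$, and suppose $y_{-1}>1$. Suppose that for some $\sigma\in\{1,-1\}$, $y_\sigma$ is the square of an integer and \[ y_\sigma<\max\left(1,\ \frac{76|N_\alpha|^{3/2}}{\sqrt d\,(|g|\,\mathcal N_{d',4})^2}\right), \] where $g,\mathcal N_{d',4}$ are computed from $x_\sigma$ as below. Then $u=2$, $t^2-du^2=-4$ and $\gcd(a^2,d)=1$.
   Context: $\operatorname{core}(n)$ is the unique squarefree integer with $n/\operatorname{core}(n)$ a perfect square; $v_2$ is the $2$-adic valuation. Put $t'=\operatorname{core}(N_\alpha)$, $u_1=2x_\sigma$, $u_2=2\sqrt{N_\alpha/\operatorname{core}(N_\alpha)}$; $g_1=\gcd(u_1,u_2)$, $g_2=\gcd(u_1/g_1,t')$; $g_3=1$ if $t'\equiv1\pmod4$ and $(u_1-u_2)/g_1$ even, $g_3=2$ if $t'\equiv3\pmod4$ and $(u_1-u_2)/g_1$ even, $g_3=4$ otherwise; $g=g_1\sqrt{g_2/g_3}$; $d'=u_2^2t'/g^2$; $\mathcal N_{d',4}=2^{\min(v_2(d')/2,\,3)}$. *)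

From Stdlib Require Import Bool ZArith Reals Lra ClassicalEpsilon.
Open Scope Z_scope.

Definition squarefree (c : Z) : Prop :=
  c <> 0 /\ forall p : Z, (p * p | c) -> p = 1 \/ p = -1.

Definition is_core (n c : Z) : Prop :=
  squarefree c /\ exists m : Z, n = c * (m * m).

Definition core (n : Z) : Z := epsilon (inhabits 0) (is_core n).

Definition v2 (n : Z) : nat :=
  epsilon (inhabits 0%nat)
    (fun k : nat => (2 ^ Z.of_nat k | n) /\ ~ (2 ^ Z.of_nat (S k) | n)).

Definition Nalpha (a d : Z) : Z := a ^ 2 - d.

Definition tpr (a d : Z) : Z := core (Nalpha a d).

(* u2 = 2 sqrt(N_alpha / core(N_alpha)) (an integer: the quotient is a square) *)
Definition u2 (a d : Z) : Z := 2 * Z.sqrt (Nalpha a d / tpr a d).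

(* In all the following, u1 = 2 x_sigma is passed as the integer argument u1 *)
Definition g1 (a d u1 : Z) : Z := Z.gcd u1 (u2 a d).
Definition g2 (a d u1 : Z) : Z := Z.gcd (u1 / g1 a d u1) (tpr a d).
Definition g3 (a d u1 : Z) : Z :=
  let ev := Z.even ((u1 - u2 a d) / g1 a d u1) in
  if andb (tpr a d mod 4 =? 1) ev then 1
  else if andb (tpr a d mod 4 =? 3) ev then 2
  else 4.

Definition gR (a d u1 : Z) : R :=
  (IZR (g1 a d u1) * sqrt (IZR (g2 a d u1) / IZR (g3 a d u1)))%R.

(* d' = u2^2 t' / g^2 = u2^2 t' g3 / (g1^2 g2), an integer (g1 | u2, g2 | t') *)
Definition dpr (a d u1 : Z) : Z :=
  (u2 a d ^ 2 * tpr a d * g3 a d u1) / (g1 a d u1 ^ 2 * g2 a d u1).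

Definition Ncal (a d u1 : Z) : R :=
  Rpower 2 (Rmin (INR (v2 (dpr a d u1)) / 2) 3).

(* Since -N_alpha = s^2 with s odd, we have d = a^2 + s^2 and t' = -1, u2 = 2 s.  For
   u1 = 2 x the constants collapse: g1 = 2 gcd(x, s), g2 = 1, g3 is 2 or 4 and
   N_{d',4}^2 = g3, so (|g| N_{d',4})^2 = 4 gcd(x, s)^2 and the hypothesis on y_sigma = m^2
   reads 4 m^2 sqrt d gcd(x, s)^2 < 76 s^3.
   The identity 4 m^2 = t^2 + d u^2 + 2 sigma a t u and the norm equation, read modulo 8
   and 3, force t = 2 w and either u = 2 with norm -4, or u = 8 with w^2 = 16 d + 1.  In
   the second case m^2 >= w^2 + 16 d - 8 a w is too large for the bound.  In the first, a
   common factor of a and s is odd and prime to 3 (as w^2 = d - 1), hence at least 5 if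
   it is not 1, and it divides x; together with m^2 >= s^2 this again violates the bound.
   So gcd(a, s) = 1, i.e. gcd(a^2, d) = 1. *)

From Stdlib Require Import ZArith Reals Lra Lia Znumtheory ClassicalEpsilon.
Open Scope Z_scope.

Lemma odd_square_mod8 x : Z.odd x = true -> exists k, x * x = 8 * k + 1.
Proof.
  intros Hx; destruct (Z.Even_or_Odd x) as [[l ->] | [l ->]].
  - now rewrite Z.odd_even in Hx.
  - destruct (Z.Even_or_Odd l) as [[j ->] | [j ->]].
    + now exists (2 * j * j + j); ring.
    + now exists (2 * j * j + 3 * j + 1); ring.
Qed.

Lemma square_mod4 x : exists k, x * x = 4 * k \/ x * x = 8 * k + 1.
Proof.
  destruct (Z.Even_or_Odd x) as [[l ->] | [l ->]].
  - now exists (l * l); left; ring.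
  - destruct (odd_square_mod8 (2 * l + 1) (Z.odd_odd l)) as [k Hk].
    now exists k; right.
Qed.

Lemma square_mod3 x : exists k, x * x = 3 * k \/ x * x = 3 * k + 1.
Proof.
  pose proof (Z.div_mod x 3 ltac:(lia)) as Hx.
  pose proof (Z.mod_pos_bound x 3 ltac:(lia)) as Hr.
  set (q := x / 3) in *; set (r := x mod 3) in *.
  assert (r = 0 \/ r = 1 \/ r = 2) as [-> | [-> | ->]] by lia; rewrite Hx.
  - now exists (3 * q * q); left; ring.
  - now exists (3 * q * q + 2 * q); right; ring.
  - now exists (3 * q * q + 4 * q + 1); right; ring.
Qed.

Lemma square_of_rational_square d A B :
  B <> 0 -> d * (B * B) = A * A -> exists r, d = r * r.
Proof.
  intros HB HdAB.
  set (g := Z.gcd A B).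
  assert (Hg : 0 < g).
  { pose proof (Z.gcd_nonneg A B); enough (g <> 0) by lia.
    now intros ?%Z.gcd_eq_0. }
  destruct (Z.gcd_divide_l A B) as [A' HA], (Z.gcd_divide_r A B) as [B' HB'].
  fold g in HA, HB'.
  assert (Hcop : Z.gcd B' A' = 1).
  { rewrite Z.gcd_comm; apply (Z.mul_reg_r _ _ g); [lia |].
    rewrite Z.mul_1_l, <- Z.gcd_mul_mono_r_nonneg, <- HA, <- HB' by lia; reflexivity. }
  assert (HdAB' : d * (B' * B') = A' * A') by (apply (Z.mul_reg_r _ _ (g * g)); nia).
  assert (HBA : (B' | A')) by (apply Z.gauss with A'; [exists (d * B'); lia | exact Hcop]).
  assert (HB1 : (B' | 1)) by (rewrite <- Hcop; apply Z.gcd_greatest; auto using Z.divide_refl).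
  exists A'; apply Z.divide_1_r in HB1; destruct HB1 as [-> | ->]; lia.
Qed.

Lemma gcd_pos_r x s : 0 < s -> 0 < Z.gcd x s.
Proof.
  intros Hs; pose proof (Z.gcd_nonneg x s).
  enough (Z.gcd x s <> 0) by lia. intros [_ ?]%Z.gcd_eq_0; lia.
Qed.

Lemma core_opp_square s : s <> 0 -> core (- (s * s)) = -1.
Proof.
  intros Hs; unfold core.
  assert (Hm1 : is_core (- (s * s)) (-1)).
  { split; [split; [lia |] | now exists s; ring].
    intros p Hp%Z.divide_opp_r%Z.divide_1_r; nia. }
  destruct (epsilon_spec (inhabits 0) _ (ex_intro _ _ Hm1)) as [[Hc0 Hsqf] [m Hm]].
  set (c := epsilon _ _) in *.
  assert (Hm0 : m <> 0) by (intros ->; lia).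
  assert (Hc : c < 0) by nia.
  destruct (square_of_rational_square (- c) s m Hm0 ltac:(lia)) as [q Hq].
  assert (Hqc : (q * q | c)) by (exists (-1); lia).
  destruct (Hsqf q Hqc) as [-> | ->]; lia.
Qed.

Lemma v2_eq n j : (2 ^ Z.of_nat j | n) -> ~ (2 ^ Z.of_nat (S j) | n) -> v2 n = j.
Proof.
  intros Hj Hj1; unfold v2.
  destruct (epsilon_spec (inhabits 0%nat)
              (fun k : nat => (2 ^ Z.of_nat k | n) /\ ~ (2 ^ Z.of_nat (S k) | n))
              (ex_intro _ j (conj Hj Hj1))) as [Hv Hv1].
  set (v := epsilon _ _) in *.
  assert (Hpow_le : forall i k, (S i <= k)%nat -> (2 ^ Z.of_nat k | n) -> (2 ^ Z.of_nat (S i) | n)).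
  { intros i k Hik Hk; eapply Z.divide_trans; [| exact Hk].
    exists (2 ^ (Z.of_nat k - Z.of_nat (S i))); rewrite <- Z.pow_add_r by lia; f_equal; lia. }
  destruct (Nat.lt_total v j) as [Hlt | [Heq | Hgt]]; [| exact Heq |].
  - now destruct (Hv1 (Hpow_le v j Hlt Hj)).
  - now destruct (Hj1 (Hpow_le j v Hgt Hv)).
Qed.

Lemma v2_odd_mul_pow2 k j : Z.odd k = true -> v2 (k * 2 ^ Z.of_nat j) = j.
Proof.
  intros Hk; apply v2_eq; [now exists k |].
  rewrite Nat2Z.inj_succ, Z.pow_succ_r by lia.
  intros [c Hc].
  assert (Hpos : 0 < 2 ^ Z.of_nat j) by (apply Z.pow_pos_nonneg; lia).
  assert (k = c * 2) by (apply (Z.mul_reg_r _ _ (2 ^ Z.of_nat j)); lia).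
  subst k; now rewrite Z.odd_mul, Bool.andb_false_r in Hk.
Qed.

Lemma nonsquare_sqrt_coords_eq0 d A B : ~ (exists r, d = r * r) -> 0 <= d ->
  IZR A = (IZR B * sqrt (IZR d))%R -> A = 0 /\ B = 0.
Proof.
  intros Hns Hd HAB.
  assert (Hr : (sqrt (IZR d) * sqrt (IZR d) = IZR d)%R) by (apply sqrt_sqrt, IZR_le; lia).
  destruct (Z.eq_dec B 0) as [-> | HB].
  - now rewrite Rmult_0_l in HAB; apply eq_IZR in HAB.
  - exfalso; apply Hns, (square_of_rational_square d A B HB), eq_IZR.
    set (r := sqrt (IZR d)) in *.
    rewrite !mult_IZR, HAB, <- Hr; ring.
Qed.

Lemma powerRZ_unit_square d t u e sigma : 0 <= d ->
  t * t - d * (u * u) = 4 * e -> (e = 1 \/ e = -1) -> (sigma = 1 \/ sigma = -1) ->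
  powerRZ ((IZR t + IZR u * sqrt (IZR d)) / 2) (2 * sigma)
  = ((IZR t * IZR t + IZR d * (IZR u * IZR u)
      + 2 * IZR sigma * IZR t * IZR u * sqrt (IZR d)) / 4)%R.
Proof.
  intros Hd Hnorm He Hsigma.
  assert (Hr : (sqrt (IZR d) * sqrt (IZR d) = IZR d)%R) by (apply sqrt_sqrt, IZR_le; lia).
  set (r := sqrt (IZR d)) in *.
  apply (f_equal IZR) in Hnorm; rewrite minus_IZR, !mult_IZR in Hnorm.
  rewrite <- Hr in Hnorm |- *.
  destruct Hsigma as [-> | ->]; simpl.
  - field.
  - (* the conjugate of eps is e / eps *)
    set (q := ((IZR t + IZR u * r) / 2)%R); set (q' := ((IZR t - IZR u * r) / 2)%R).
    assert (Hq : (q * q' = IZR e)%R) by (unfold q, q'; lra).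
    assert (He2 : (IZR e * IZR e = 1)%R) by (destruct He as [-> | ->]; lra).
    replace (_ / 4)%R with (q' * q')%R by (unfold q'; field).
    symmetry; apply Rmult_inv_r_uniq.
    + intros Hq0; apply R1_neq_R0; rewrite <- He2, <- Hq.
      transitivity (q * (q * 1) * (q' * q'))%R; [ring | rewrite Hq0; ring].
    + transitivity (q * q' * (q * q'))%R; [ring | now rewrite Hq].
Qed.

Lemma unit_square_coords a d t u e sigma X Y :
  ~ (exists r, d = r * r) -> 0 <= d ->
  t * t - d * (u * u) = 4 * e -> (e = 1 \/ e = -1) -> (sigma = 1 \/ sigma = -1) ->
  ((IZR X + IZR Y * sqrt (IZR d)) / 2
     = (IZR a + sqrt (IZR d)) *
       powerRZ ((IZR t + IZR u * sqrt (IZR d)) / 2) (2 * sigma))%R ->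
  2 * X = a * (t * t + d * (u * u)) + 2 * sigma * d * t * u /\
  2 * Y = t * t + d * (u * u) + 2 * sigma * a * t * u.
Proof.
  intros Hns Hd Hnorm He Hsigma HXY.
  rewrite (powerRZ_unit_square d t u e sigma Hd Hnorm He Hsigma) in HXY.
  assert (Hr : (sqrt (IZR d) * sqrt (IZR d) = IZR d)%R) by (apply sqrt_sqrt, IZR_le; lia).
  set (r := sqrt (IZR d)) in *.
  destruct (nonsquare_sqrt_coords_eq0 d
              (2 * X - a * (t * t + d * (u * u)) - 2 * sigma * d * t * u)
              (t * t + d * (u * u) + 2 * sigma * a * t * u - 2 * Y) Hns Hd).
  - repeat rewrite ?minus_IZR, ?plus_IZR, ?mult_IZR; fold r; rewrite <- Hr in HXY |- *.
    lra.
  - lia.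
Qed.

Lemma sum_odd_square_mod8 a s : Z.odd s = true ->
  exists k, (Z.even a = true /\ a * a + s * s = 4 * k + 1)
         \/ (Z.odd a = true /\ a * a + s * s = 8 * k + 2).
Proof.
  intros Hs; destruct (odd_square_mod8 s Hs) as [j Hj].
  destruct (Z.Even_or_Odd a) as [[l ->] | [l ->]].
  - exists (l * l + 2 * j); left; split; [now rewrite Z.even_mul | lia].
  - destruct (odd_square_mod8 (2 * l + 1) (Z.odd_odd l)) as [i Hi].
    exists (i + j); right; split; [apply Z.odd_odd | lia].
Qed.

Lemma unit_coords_even a s d t u e sigma m :
  d = a * a + s * s -> Z.odd s = true ->
  t * t - d * (u * u) = 4 * e ->
  4 * (m * m) = t * t + d * (u * u) + 2 * sigma * a * t * u ->
  exists w v, t = 2 * w /\ u = 2 * v.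
Proof.
  intros Hd Hs Hnorm Hm.
  destruct (Z.Even_or_Odd u) as [[v ->] | [v ->]].
  - destruct (Z.Even_or_Odd t) as [[w ->] | [l ->]]; [now exists w, v | lia].
  - exfalso.
    destruct (odd_square_mod8 (2 * v + 1) (Z.odd_odd v)) as [j Hj].
    destruct (sum_odd_square_mod8 a s Hs) as [k [[Ha Hdk] | [Ha Hdk]]]; rewrite <- Hd in Hdk.
    + apply Zeven_bool_iff, Zeven_ex in Ha as [a1 ->].
      assert (d * ((2 * v + 1) * (2 * v + 1)) = (4 * k + 1) * (8 * j + 1))
        by (rewrite Hj, Hdk; ring).
      lia.
    + destruct (square_mod4 t) as [i Hi].
      assert (d * ((2 * v + 1) * (2 * v + 1)) = (8 * k + 2) * (8 * j + 1))
        by (rewrite Hj, Hdk; ring).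
      lia.
Qed.

Lemma small_unit_cases a s d w v e sigma m :
  d = a * a + s * s -> Z.odd s = true -> (e = 1 \/ e = -1) -> (sigma = 1 \/ sigma = -1) ->
  1 <= v <= 4 -> w * w - d * (v * v) = e ->
  m * m = w * w + d * (v * v) + 2 * sigma * a * w * v ->
  (v = 1 /\ e = -1) \/ (v = 4 /\ e = 1).
Proof.
  intros Hd Hs He Hsigma Hv Hnorm Hm.
  destruct (square_mod4 w) as [i Hi], (square_mod3 w) as [j Hj].
  destruct (sum_odd_square_mod8 a s Hs) as [k [[Ha Hdk] | [Ha Hdk]]]; rewrite <- Hd in Hdk.
  all: assert (v = 1 \/ v = 2 \/ v = 3 \/ v = 4) as [-> | [-> | [-> | ->]]] by lia.
  all: destruct He as [-> | ->]; try lia.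
  (* d = 2 mod 8, v = 2, e = 1: then a and w are odd and m^2 = 5 mod 8 *)
  exfalso.
  destruct (Z.Even_or_Odd w) as [[w1 ->] | [w1 ->]]; [lia |].
  apply Zodd_bool_iff, Zodd_ex in Ha as [a1 ->].
  destruct (square_mod4 m) as [l Hl].
  destruct Hsigma as [-> | ->]; lia.
Qed.

Lemma unit_cases a s d t u e sigma m :
  d = a * a + s * s -> Z.odd s = true -> (e = 1 \/ e = -1) -> (sigma = 1 \/ sigma = -1) ->
  1 <= u <= 8 -> t * t - d * (u * u) = 4 * e ->
  4 * (m * m) = t * t + d * (u * u) + 2 * sigma * a * t * u ->
  exists w, t = 2 * w /\ ((u = 2 /\ e = -1) \/ (u = 8 /\ e = 1)).
Proof.
  intros Hd Hs He Hsigma Hu Hnorm Hm.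
  destruct (unit_coords_even a s d t u e sigma m Hd Hs Hnorm Hm) as [w [v [-> ->]]].
  exists w; split; [reflexivity |].
  destruct (small_unit_cases a s d w v e sigma m Hd Hs He Hsigma); lia.
Qed.

Lemma Ncal_sq a d u1 v : v2 (dpr a d u1) = v -> (v <= 6)%nat -> (Ncal a d u1 ^ 2 = 2 ^ v)%R.
Proof.
  intros Hdv Hv; unfold Ncal; rewrite Hdv.
  assert (Hmin : Rmin (INR v / 2) 3 = (INR v / 2)%R).
  { apply Rmin_left; apply le_INR in Hv; simpl in Hv; lra. }
  rewrite Hmin, <- (Rpower_pow 2 (Rpower _ _)), <- (Rpower_pow v 2), Rpower_mult
    by (apply exp_pos || lra).
  f_equal; simpl; lra.
Qed.

Section OppSquareNorm.

Variables (a d s : Z).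
Hypotheses (Hs : 0 < s) (Hs_odd : Z.odd s = true) (HN : Nalpha a d = - (s * s)).

Lemma tpr_opp_square : tpr a d = -1.
Proof. unfold tpr; rewrite HN; apply core_opp_square; lia. Qed.

Lemma u2_opp_square : u2 a d = 2 * s.
Proof.
  unfold u2; rewrite tpr_opp_square, HN.
  replace (- (s * s)) with (s * s * -1) by ring.
  rewrite Z.div_mul, Z.sqrt_square by lia; reflexivity.
Qed.

Lemma g1_double x : g1 a d (2 * x) = 2 * Z.gcd x s.
Proof. unfold g1; rewrite u2_opp_square, Z.gcd_mul_mono_l; reflexivity. Qed.

Lemma g2_opp_square u1 : g2 a d u1 = 1.
Proof.
  unfold g2; rewrite tpr_opp_square; change (-1) with (- (1)).
  now rewrite Z.gcd_opp_r, Z.gcd_1_r.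
Qed.

Lemma g3_opp_square u1 : g3 a d u1 = 2 \/ g3 a d u1 = 4.
Proof. unfold g3; rewrite tpr_opp_square; destruct Z.even; simpl; auto. Qed.

Lemma IZR_g3_pos u1 : (0 < IZR (g3 a d u1))%R.
Proof. apply IZR_lt; destruct (g3_opp_square u1) as [-> | ->]; lia. Qed.

Lemma dpr_double x :
  exists k, Z.odd k = true /\ dpr a d (2 * x) = - (k * k) * g3 a d (2 * x).
Proof.
  pose proof (gcd_pos_r x s Hs) as Hh; set (h := Z.gcd x s) in *.
  destruct (Z.gcd_divide_r x s) as [k Hk]; fold h in Hk.
  exists k; split.
  - rewrite Hk, Z.odd_mul in Hs_odd; destruct (Z.odd k); [reflexivity | discriminate].
  - unfold dpr; rewrite u2_opp_square, tpr_opp_square, g1_double, g2_opp_square; fold h.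
    rewrite Hk; symmetry; apply Z.div_unique_exact; [nia | ring].
Qed.

Lemma Ncal_sq_double x : (Ncal a d (2 * x) ^ 2 = IZR (g3 a d (2 * x)))%R.
Proof.
  destruct (dpr_double x) as [k [Hk Hdpr]].
  assert (Hk' : Z.odd (- (k * k)) = true) by now rewrite Z.odd_opp, Z.odd_mul, Hk.
  destruct (g3_opp_square (2 * x)) as [E | E]; rewrite E in Hdpr |- *.
  - rewrite (Ncal_sq _ _ _ 1); [simpl; lra | rewrite Hdpr; exact (v2_odd_mul_pow2 _ 1 Hk') | lia].
  - rewrite (Ncal_sq _ _ _ 2); [simpl; lra | rewrite Hdpr; exact (v2_odd_mul_pow2 _ 2 Hk') | lia].
Qed.

Lemma gR_sq_double x :
  (gR a d (2 * x) ^ 2 = 4 * IZR (Z.gcd x s) ^ 2 / IZR (g3 a d (2 * x)))%R.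
Proof.
  pose proof (IZR_g3_pos (2 * x)) as Hg3.
  unfold gR; rewrite g1_double, g2_opp_square, Rpow_mult_distr, pow2_sqrt, mult_IZR.
  - field; lra.
  - apply Rlt_le, Rdiv_lt_0_compat; lra.
Qed.

Lemma gR_Ncal_sq x :
  ((Rabs (gR a d (2 * x)) * Ncal a d (2 * x)) ^ 2 = 4 * IZR (Z.gcd x s) ^ 2)%R.
Proof.
  pose proof (IZR_g3_pos (2 * x)) as Hg3.
  rewrite Rpow_mult_distr, pow2_abs, gR_sq_double, Ncal_sq_double.
  field; lra.
Qed.

End OppSquareNorm.

Section RealInequalities.

Local Open Scope R_scope.

Lemma Rpower_abs_opp_square_3_2 (s : Z) : (0 < s)%Z ->
  Rpower (Rabs (IZR (- (s * s)))) (3 / 2) = IZR s ^ 3.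
Proof.
  intros Hs; assert (HS : 0 < IZR s) by (apply IZR_lt; lia).
  rewrite opp_IZR, mult_IZR, Rabs_Ropp, Rabs_pos_eq by nra.
  rewrite <- Rpower_mult_distr, <- Rpower_plus by lra.
  replace (3 / 2 + 3 / 2) with (INR 3) by (simpl; lra).
  apply Rpower_pow; lra.
Qed.

Lemma Rmax_1_lt y B : 1 <= y -> y < Rmax 1 B -> y < B.
Proof. unfold Rmax; destruct Rle_dec; lra. Qed.

Lemma cube_lt_bound_gcd_ge5 S r M H : 0 < S < r -> S * S <= M -> 5 <= H ->
  76 * S ^ 3 < 4 * M * r * H ^ 2.
Proof.
  intros HS HM HH.
  assert (HSr : S ^ 3 < S * S * r).
  { replace (S ^ 3) with (S * S * S) by ring; apply Rmult_lt_compat_l; nra. }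
  assert (HMr : S * S * r * 25 <= M * r * H ^ 2).
  { apply Rmult_le_compat; [nra | lra | apply Rmult_le_compat_r; lra | nra]. }
  nra.
Qed.

Lemma cube_lt_bound_u8 A S W r M H : 0 < A -> 0 < S -> 0 < W -> 0 < r ->
  r * r = A * A + S * S -> W * W = 16 * (r * r) + 1 ->
  W * W + 16 * (r * r) - 8 * A * W <= M -> 1 <= H ->
  76 * S ^ 3 < 4 * M * r * H ^ 2.
Proof.
  intros HA HS HW Hr Hr2 HW2 HM HH.
  assert (HWr : 4 * r < W) by nra.
  assert (HAr : A < r) by nra.
  assert (HMA : 32 * r * (r - A) <= M).
  { assert (16 * ((r - A) * (r - A)) <= (W - 4 * A) * (W - 4 * A)) by nra.
    nra. }
  (* AM-GM: S (r + A) <= S^2 + (r + A)^2 / 4 = (5 r^2 + 2 r A - 3 A^2) / 4 <= 4 r^2 / 3 *)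
  assert (HSA : 19 * S * (r + A) < 32 * (r * r)).
  { assert (4 * S * (r + A) <= 4 * (S * S) + (r + A) * (r + A))
      by (pose proof (pow2_ge_0 (2 * S - (r + A))); nra).
    assert (0 < 33 * (r * r) - 38 * r * A + 57 * (A * A))
      by (pose proof (pow2_ge_0 (33 * r - 19 * A)); nra).
    nra. }
  assert (HS3 : 19 * S ^ 3 < 32 * (r * r) * (r - A)).
  { assert (HS2 : S * S = (r + A) * (r - A)) by lra.
    replace (19 * S ^ 3) with (19 * S * (r + A) * (r - A)).
    - apply Rmult_lt_compat_r; lra.
    - rewrite (Rmult_assoc (19 * S)), <- HS2; ring. }
  assert (HM0 : 0 < M) by nra.
  assert (HMH : M * r * 1 <= M * r * H ^ 2) by (apply Rmult_le_compat_l; nra).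
  nra.
Qed.

End RealInequalities.

Lemma opp_Nalpha_odd_square a d :
  (exists s0, - Nalpha a d = s0 * s0) -> Z.odd (- Nalpha a d) = true ->
  exists s, 0 < s /\ Z.odd s = true /\ Nalpha a d = - (s * s).
Proof.
  intros [s0 Hs0] Hodd.
  rewrite <- Z.abs_square in Hs0; set (s := Z.abs s0) in Hs0.
  rewrite Hs0, Z.odd_mul, Bool.andb_diag in Hodd.
  exists s; repeat split; [| exact Hodd | lia].
  assert (s <> 0) by (intros Hs; now rewrite Hs in Hodd).
  pose proof (Z.abs_nonneg s0); lia.
Qed.

Lemma sqrt_sum_squares a s d : d = a * a + s * s ->
  (sqrt (IZR d) * sqrt (IZR d) = IZR a * IZR a + IZR s * IZR s)%R.
Proof.
  intros ->; rewrite sqrt_sqrt, plus_IZR, !mult_IZR; [reflexivity |].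
  apply IZR_le; nia.
Qed.

Lemma bound_hypothesis_gcd a d s x m : 0 < d -> 0 < s -> Z.odd s = true ->
  Nalpha a d = - (s * s) ->
  (IZR (m * m) < Rmax 1 (76 * Rpower (Rabs (IZR (Nalpha a d))) (3 / 2)
                        / (sqrt (IZR d) * (Rabs (gR a d (2 * x)) * Ncal a d (2 * x)) ^ 2)))%R ->
  (4 * IZR (m * m) * sqrt (IZR d) * IZR (Z.gcd x s) ^ 2 < 76 * IZR s ^ 3)%R.
Proof.
  intros Hd Hs Hs_odd HN Hbound.
  assert (Hr : (0 < sqrt (IZR d))%R) by (apply sqrt_lt_R0, IZR_lt; exact Hd).
  assert (Hh : (1 <= IZR (Z.gcd x s))%R) by (apply IZR_le; pose proof (gcd_pos_r x s Hs); lia).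
  assert (Hs3 : (0 < IZR s ^ 3)%R) by (apply pow_lt, IZR_lt; exact Hs).
  destruct (Z.eq_dec m 0) as [-> | Hm0]; [simpl; lra |].
  rewrite HN, (Rpower_abs_opp_square_3_2 s Hs), (gR_Ncal_sq a d s Hs Hs_odd HN) in Hbound.
  apply Rmax_1_lt in Hbound; [| apply IZR_le; nia].
  assert (HD : (0 < sqrt (IZR d) * (4 * IZR (Z.gcd x s) ^ 2))%R)
    by (apply Rmult_lt_0_compat; [exact Hr | nra]).
  apply (Rmult_lt_compat_r _ _ _ HD) in Hbound.
  unfold Rdiv in Hbound; rewrite Rmult_assoc, Rinv_l, Rmult_1_r in Hbound by lra.
  lra.
Qed.

Lemma gcd_sum_squares_ge5 a s w : 0 < s -> Z.odd s = true ->
  w * w = a * a + s * s - 1 -> Z.gcd a s <> 1 -> 5 <= Z.gcd a s.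
Proof.
  intros Hs Hs_odd Hw Hg1.
  pose proof (gcd_pos_r a s Hs) as Hg0.
  destruct (Z.gcd_divide_l a s) as [a1 Ha], (Z.gcd_divide_r a s) as [s1 Hs1].
  set (g := Z.gcd a s) in *.
  assert (Hg_odd : Z.odd g = true).
  { rewrite Hs1, Z.odd_mul in Hs_odd; destruct (Z.odd g); [reflexivity |].
    now rewrite Bool.andb_false_r in Hs_odd. }
  assert (Hg3 : g <> 3).
  { intros E; rewrite E in Ha, Hs1; subst a s.
    destruct (square_mod3 w) as [j Hj]; lia. }
  assert (g = 2 \/ g = 4 \/ 5 <= g) as [E | [E | E]] by lia; try rewrite E in Hg_odd; easy.
Qed.

Lemma gcd_sq_sum_squares a s : Z.gcd a s = 1 -> Z.gcd (a ^ 2) (a * a + s * s) = 1.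
Proof.
  intros Hg%Zgcd_1_rel_prime.
  rewrite Z.pow_2_r, Z.add_comm, Z.gcd_add_diag_r.
  apply Zgcd_1_rel_prime, rel_prime_mult; apply rel_prime_sym, rel_prime_mult;
    now apply rel_prime_sym.
Qed.

Lemma coprime_of_bound_u2 a s d w sigma m : 0 < a -> 0 < s -> Z.odd s = true ->
  d = a * a + s * s -> w * w - d = -1 -> (sigma = 1 \/ sigma = -1) ->
  m * m = w * w + d + 2 * sigma * a * w ->
  (4 * IZR (m * m) * sqrt (IZR d) * IZR (Z.gcd (a * (w * w + d) + 2 * sigma * d * w) s) ^ 2
     < 76 * IZR s ^ 3)%R ->
  Z.gcd a s = 1.
Proof.
  intros Ha Hs Hs_odd Hd Hw Hsigma Hm Hbound.
  destruct (Z.eq_dec (Z.gcd a s) 1) as [| Hg1]; [assumption | exfalso].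
  set (x := a * (w * w + d) + 2 * sigma * d * w) in Hbound.
  assert (Hg5 : 5 <= Z.gcd a s) by (apply (gcd_sum_squares_ge5 a s w Hs Hs_odd); [lia | exact Hg1]).
  assert (Hgd : (Z.gcd a s | d)).
  { rewrite Hd; apply Z.divide_add_r; apply Z.divide_mul_l;
      [apply Z.gcd_divide_l | apply Z.gcd_divide_r]. }
  assert (Hgx : (Z.gcd a s | x)).
  { apply Z.divide_add_r; apply Z.divide_mul_l; [apply Z.gcd_divide_l |].
    now apply Z.divide_mul_r. }
  assert (Hgh : Z.gcd a s <= Z.gcd x s).
  { apply Z.divide_pos_le; [now apply gcd_pos_r |].
    apply Z.gcd_greatest; [exact Hgx | apply Z.gcd_divide_r]. }
  assert (Hms : s * s <= m * m) by (destruct Hsigma; subst sigma; nia).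
  pose proof (sqrt_sum_squares a s d Hd) as Hr2.
  assert (Hr : (0 < sqrt (IZR d))%R) by (apply sqrt_lt_R0, IZR_lt; nia).
  assert (HS : (0 < IZR s)%R) by (apply IZR_lt; exact Hs).
  assert (HA : (0 < IZR a)%R) by (apply IZR_lt; exact Ha).
  assert (HSr : (IZR s < sqrt (IZR d))%R) by nra.
  assert (HM : (IZR s * IZR s <= IZR (m * m))%R) by (rewrite <- mult_IZR; apply IZR_le, Hms).
  assert (HH : (5 <= IZR (Z.gcd x s))%R) by (apply IZR_le; lia).
  pose proof (cube_lt_bound_gcd_ge5 _ _ _ _ (conj HS HSr) HM HH); lra.
Qed.

Lemma bound_u8_false a s d w sigma m x : 0 < a -> 0 < s -> 0 < w ->
  d = a * a + s * s -> w * w - 16 * d = 1 -> (sigma = 1 \/ sigma = -1) ->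
  m * m = w * w + 16 * d + 8 * sigma * a * w ->
  ~ (4 * IZR (m * m) * sqrt (IZR d) * IZR (Z.gcd x s) ^ 2 < 76 * IZR s ^ 3)%R.
Proof.
  intros Ha Hs Hw Hd Hw2 Hsigma Hm.
  assert (Hmw : w * w + 16 * d - 8 * a * w <= m * m) by (destruct Hsigma; subst sigma; nia).
  pose proof (sqrt_sum_squares a s d Hd) as Hr2.
  assert (Hr : (0 < sqrt (IZR d))%R) by (apply sqrt_lt_R0, IZR_lt; nia).
  apply Rle_not_lt, Rlt_le, (cube_lt_bound_u8 (IZR a) (IZR s) (IZR w));
    try (apply IZR_lt; assumption).
  - exact Hr.
  - exact Hr2.
  - rewrite sqrt_sqrt by (apply IZR_le; lia).
    apply (f_equal IZR) in Hw2; rewrite minus_IZR, !mult_IZR in Hw2; lra.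
  - rewrite sqrt_sqrt by (apply IZR_le; lia).
    apply IZR_le in Hmw; repeat rewrite ?minus_IZR, ?plus_IZR, ?mult_IZR in Hmw.
    rewrite mult_IZR; lra.
  - apply IZR_le; pose proof (gcd_pos_r x s Hs); lia.
Qed.

Theorem lemma5p5 (a d t u sigma Xs Ys Xm Ym : Z) :
  0 < a -> 0 < d ->
  ~ (exists r : Z, d = r * r) ->
  (* -N_alpha is an odd perfect square *)
  (exists s : Z, - Nalpha a d = s * s) -> Z.odd (- Nalpha a d) = true ->
  0 < t -> 1 <= u <= 8 ->
  (* eps = (t + u sqrt d)/2 is a unit of O_{Q(sqrt d)}: integral with norm +-1 *)
  (t ^ 2 - d * u ^ 2 = 4 \/ t ^ 2 - d * u ^ 2 = -4) ->
  (sigma = 1 \/ sigma = -1) ->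
  (* x_sigma + y_sigma sqrt d = alpha eps^(2 sigma), with x_sigma = Xs/2, y_sigma = Ys/2 *)
  ((IZR Xs + IZR Ys * sqrt (IZR d)) / 2
     = (IZR a + sqrt (IZR d)) *
       powerRZ ((IZR t + IZR u * sqrt (IZR d)) / 2) (2 * sigma))%R ->
  (* x_{-1} + y_{-1} sqrt d = alpha eps^(-2), with x_{-1} = Xm/2, y_{-1} = Ym/2 *)
  ((IZR Xm + IZR Ym * sqrt (IZR d)) / 2
     = (IZR a + sqrt (IZR d)) *
       powerRZ ((IZR t + IZR u * sqrt (IZR d)) / 2) (-2))%R ->
  (IZR Ym / 2 > 1)%R ->
  (exists m : Z, (IZR Ys / 2 = IZR (m * m))%R) ->
  (* u1 = 2 x_sigma = Xs *)
  (IZR Ys / 2 <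
     Rmax 1 (76 * Rpower (Rabs (IZR (Nalpha a d))) (3 / 2)
             / (sqrt (IZR d) * (Rabs (gR a d Xs) * Ncal a d Xs) ^ 2)))%R ->
  u = 2 /\ t ^ 2 - d * u ^ 2 = -4 /\ Z.gcd (a ^ 2) d = 1.
Proof.
  intros Ha Hd Hns Hsq Hodd Ht Hu Hnorm Hsigma Hcoords _ _ [m Hm] Hbound.
  destruct (opp_Nalpha_odd_square a d Hsq Hodd) as [s [Hs [Hs_odd HN]]].
  assert (Hds : d = a * a + s * s) by (unfold Nalpha in HN; lia).
  assert (He : exists e, (e = 1 \/ e = -1) /\ t * t - d * (u * u) = 4 * e)
    by (destruct Hnorm; [exists 1 | exists (-1)]; split; lia).
  destruct He as [e [He Hnorm']].
  destruct (unit_square_coords a d t u e sigma Xs Ys Hns ltac:(lia) Hnorm' He Hsigma Hcoords)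
    as [HX HY].
  assert (HYm : Ys = 2 * (m * m)) by (apply eq_IZR; rewrite mult_IZR; lra).
  rewrite Hm in Hbound.
  destruct (unit_cases a s d t u e sigma m Hds Hs_odd He Hsigma Hu Hnorm' ltac:(lia))
    as [w [-> [[-> ->] | [-> ->]]]].
  - replace Xs with (2 * (a * (w * w + d) + 2 * sigma * d * w)) in Hbound by lia.
    apply (bound_hypothesis_gcd a d s) in Hbound; [| lia | lia | exact Hs_odd | exact HN].
    split; [reflexivity | split; [lia |]].
    rewrite Hds; apply gcd_sq_sum_squares.
    apply (coprime_of_bound_u2 a s d w sigma m); auto; lia.
  - replace Xs with (2 * (a * (w * w + 16 * d) + 8 * sigma * d * w)) in Hbound by lia.
    apply (bound_hypothesis_gcd a d s) in Hbound; [| lia | lia | exact Hs_odd | exact HN].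
    exfalso; revert Hbound; apply (bound_u8_false a s d w sigma m); auto; lia.
Qed.
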